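(* Assume Assumptions 1, 2, 3 (stated in the context). For any fixed $\epsilon_5>0$, if Line-Search (Algorithm 3, described in the context), called with input point $\theta$, makes infinitely many calls to subdivision, then either $\hat{\mathcal{P}}(\epsilon_5)$ (evaluated at $\theta$) is unbounded or $\theta$ is unsafe.
   Context: Problem: for $\theta$ and $t\in[0,T]$, body $i$ occupies $b_i(t,\theta)\subset\mathbb{R}^3$, obstacles occupy $o$; $\text{dist}$ is the shortest Euclidean distance between sets; $d_0\ge0$; $\mathcal{O}(\theta)$ twice differentiable cost. Assumption 1: finite decompositions $b_i=\bigcup_j b_{ij}$, $o=\bigcup_k o_k$ with each $(t,\theta)\mapsto\text{dist}(b_{ij}(t,\theta),o_k)$ sufficiently smooth. Assumption 2: the feasible domain of $t,\theta$ is bounded. Assumption 3: $\mathcal{P}$ sufficiently smooth, monotonically decreasing on $(0,\infty)$, $\lim_{x\to0}\mathcal{P}=\infty$, $\lim_{x\to\infty}\mathcal{P}=0$, $\lim_{x\to0}x\mathcal{P}(x)=\infty$. $L_1$: a constant with $|\text{dist}(b_{ij}(t_1,\theta),o_k)-\text{dist}(b_{ij}(t_2,\theta),o_k)|\le L_1|t_1-t_2|$ for all arguments. $\mathcal{P}_{ijk}(t,\theta)=\mathcal{P}(\text{dist}(b_{ij}(t,\theta),o_k)-d_0)$; per triple a finite partition of $[0,T]$ into intervals $[T_0^l,T_1^l]$; subdividing $(i,j,k,l)$ replaces the interval by its two halves; $\mathcal{P}_{ijkl}(\theta)=\mathcal{P}_{ijk}((T_0^l+T_1^l)/2,\theta)$;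 $\mathcal{E}=\mathcal{O}+\mu\sum_{ijkl}(T_1^l-T_0^l)\mathcal{P}_{ijkl}$, $\mu>0$. The hybrid penalty $\hat{\mathcal{P}}(\epsilon_5)$ is $\sum_{ijkl}$ of $(T_1^l-T_0^l)\mathcal{P}_{ijkl}$ over intervals with $T_1^l-T_0^l\ge\epsilon_5$ and of $\int_{T_0^l}^{T_1^l}\mathcal{P}_{ijk}(t,\theta)dt$ over intervals with $T_1^l-T_0^l<\epsilon_5$. Directions $d^{(1)}=-\nabla_\theta\mathcal{E}$ or $d^{(2)}=\mathcal{M}(\nabla^2_\theta\mathcal{E})^{-1}d^{(1)}$ with $\underline\beta I\preceq\mathcal{M}(H)\preceq\bar\beta I$. Wolfe: $\mathcal{E}(\theta+d\alpha)\le\mathcal{E}(\theta)+c\langle d\alpha,\nabla\mathcal{E}\rangle$, $c\in(0,1)$. Safety check at $\theta$: $\psi(x)=L_1x/2+L_2x^\eta$ ($L_2,\eta>0$); return a tuple $(i,j,k,l)$ with $\text{dist}(b_{ij}((T_0^l+T_1^l)/2,\theta),o_k)\le d_0+\psi(T_1^l-T_0^l)$ if one exists, else None ($\theta$ safe; otherwise unsafe). Line-Search$(\theta,d,\epsilon_\alpha)$ ($\alpha_0>0,\gamma\in(0,1)$): $\alpha=\alpha_0$; while $\theta+d\alpha$ fails the safety check or Wolfe: if the check returned $(i,j,k,l)$, then if $\alpha\le\epsilon_\alpha$: $\epsilon_\alpha\leftarrow\gamma\epsilon_\alpha$, subdivide $(i,j,k,l)$, re-evaluate $\mathcal{E}$,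 recompute $d$; else $\alpha\leftarrow\gamma\alpha$; if only Wolfe fails, $\alpha\leftarrow\gamma\alpha$. Return $\alpha,\epsilon_\alpha$. *)

From HB Require Import structures.
From mathcomp Require Import all_boot all_order all_algebra.
From mathcomp Require Import all_classical all_reals all_analysis.
Set Implicit Arguments. Unset Strict Implicit. Unset Printing Implicit Defensive.
Import Order.TTheory GRing.Theory Num.Theory.
Import numFieldNormedType.Exports.
Local Open Scope classical_set_scope.
Local Open Scope ring_scope.

Section Defs.
Variable R : realType.

Definition norm2 {m : nat} (x : 'rV[R]_m) : R := Num.sqrt (\sum_i x 0 i ^+ 2).

Definition setdist (A B : set 'rV[R]_3) : R :=
  inf [set norm2 (x - y) | x in A & y in B].

Definition twice_diff {V : normedModType R} (f : V -> R) : Prop :=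
  (forall x, differentiable f x) /\ (forall v x, differentiable ('D_v f) x).

Definition is_partition (T : R) (s : seq (R * R)) : Prop :=
  [/\ s != [::], (head (0, 0) s).1 = 0, (last (0, 0) s).2 = T,
      all (fun I => I.1 < I.2) s &
      forall l, (l.+1 < size s)%N -> (nth (0, 0) s l).2 = (nth (0, 0) s l.+1).1].

Definition mid (I : R * R) : R := (I.1 + I.2) / 2.
Definition len (I : R * R) : R := I.2 - I.1.

Definition evec {n : nat} (i : 'I_n) : 'rV[R]_n := delta_mx 0 i.

Definition grad {n : nat} (f : 'rV[R]_n -> R) (th : 'rV[R]_n) : 'rV[R]_n :=
  \row_i ('D_(evec i) f th).

Definition hessian {n : nat} (f : 'rV[R]_n -> R) (th : 'rV[R]_n) : 'M[R]_n :=
  \matrix_(i, j) ('D_(evec j) ('D_(evec i) f) th).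

Definition inner {n : nat} (u v : 'rV[R]_n) : R := \sum_i u 0 i * v 0 i.

Definition qform {n : nat} (A : 'M[R]_n) (v : 'rV[R]_n) : R := (v *m A *m v^T) 0 0.

Section Problem.
Variables (n : nat) (Pc Ob : finType).
(** b p t th : the piece b_ij (p = (i,j)) at time t, parameters th;
    o q : the obstacle piece o_k (q = k). *)
Variable b : Pc -> R -> 'rV[R]_n -> set 'rV[R]_3.
Variable o : Ob -> set 'rV[R]_3.

Definition Dist (p : Pc) (q : Ob) (t : R) (th : 'rV[R]_n) : R :=
  setdist (b p t th) (o q).

(** the current interval partitions, one per pair (piece, obstacle piece);
    the index l of an interval is its position in the list *)
Definition ipartition := Pc -> Ob -> seq (R * R).

Variables (d0 : R) (P : R -> R) (O : 'rV[R]_n -> R) (mu : R).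

Definition Pe (x : R) : \bar R := if 0 < x then (P x)%:E else +oo%E.

Definition Eobj (pi : ipartition) (th : 'rV[R]_n) : R :=
  O th + mu * \sum_p \sum_q \sum_(I <- pi p q)
                  len I * P (Dist p q (mid I) th - d0).

Definition hatP (eps5 : R) (pi : ipartition) (th : 'rV[R]_n) : \bar R :=
  (\sum_p \sum_q \sum_(I <- pi p q)
     (if (eps5 <= len I)%R then (len I)%:E * Pe (Dist p q (mid I) th - d0)
      else \int[@lebesgue_measure R]_(t in `[I.1, I.2]) Pe (Dist p q t th - d0)))%E.

Variables (L1 L2 eta : R).
Definition psi (x : R) : R := L1 * x / 2 + L2 * x `^ eta.

(** tau = (p, q, l) is a tuple the safety check may return *)
Definition unsafe_tuple (pi : ipartition) (th : 'rV[R]_n) (tau : Pc * Ob * nat) : Prop :=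
  let: (p, q, l) := tau in
  (l < size (pi p q))%N /\
  Dist p q (mid (nth (0, 0) (pi p q) l)) th <= d0 + psi (len (nth (0, 0) (pi p q) l)).

(** safety check returns None *)
Definition safe (pi : ipartition) (th : 'rV[R]_n) : Prop :=
  forall tau, ~ unsafe_tuple pi th tau.

Definition subdivide (pi : ipartition) (tau : Pc * Ob * nat) : ipartition :=
  let: (p, q, l) := tau in
  fun p' q' =>
    if (p' == p) && (q' == q) then
      let s := pi p q in let I := nth (0, 0) s l in
      take l s ++ [:: (I.1, mid I); (mid I, I.2)] ++ drop l.+1 s
    else pi p' q'.

(** search direction: d1 = - grad E, or d2 = M(hess E)^{-1} d1 (column
    convention, written with row vectors) *)
Definition direction (newton : bool) (M : 'M[R]_n -> 'M[R]_n)
    (pi : ipartition) (th : 'rV[R]_n) : 'rV[R]_n :=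
  let d1 := - grad (Eobj pi) th in
  if newton then d1 *m (invmx (M (hessian (Eobj pi) th)))^T else d1.

Variable c : R.
Definition wolfe (pi : ipartition) (th d : 'rV[R]_n) (a : R) : Prop :=
  Eobj pi (th + a *: d) <= Eobj pi th + c * inner (a *: d) (grad (Eobj pi) th).

(** An infinite (non-terminating) execution of Line-Search(theta, d, eps_in)
    with initial ipartition pi0.  At iteration m the state is
    (part m, eps m, alpha m, d m); chk m is the output of the safety check at
    theta + (alpha m) d m (nondeterministic choice of the returned tuple). *)
Definition LS_run (newton : bool) (M : 'M[R]_n -> 'M[R]_n)
    (alpha0 gamma eps_in : R) (pi0 : ipartition) (theta : 'rV[R]_n)
    (part : nat -> ipartition) (eps alpha : nat -> R) (d : nat -> 'rV[R]_n)
    (chk : nat -> option (Pc * Ob * nat)) : Prop :=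
  [/\ part 0%N = pi0, eps 0%N = eps_in, alpha 0%N = alpha0,
      d 0%N = direction newton M pi0 theta &
      forall m : nat,
        let th' := theta + alpha m *: d m in
        [/\
            match chk m with
            | Some tau => unsafe_tuple (part m) th' tau
            | None => safe (part m) th'
            end,
            (* the while-condition holds: safety check or Wolfe fails *)
            chk m <> None \/ ~ wolfe (part m) theta (d m) (alpha m) &
            match chk m with
            | Some tau =>
                if alpha m <= eps m then
                  [/\ eps m.+1 = gamma * eps m,
                      part m.+1 = subdivide (part m) tau,
                      d m.+1 = direction newton M (part m.+1) theta &
                      alpha m.+1 = alpha m]
                else
                  [/\ eps m.+1 = eps m, part m.+1 = part m, d m.+1 = d m &
                      alpha m.+1 = gamma * alpha m]
            | None =>
                [/\ eps m.+1 = eps m, part m.+1 = part m, d m.+1 = d m &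
                    alpha m.+1 = gamma * alpha m]
            end]].

Definition subdivides_at (eps alpha : nat -> R) (chk : nat -> option (Pc * Ob * nat))
    (m : nat) : Prop :=
  (exists tau, chk m = Some tau) /\ alpha m <= eps m.

End Problem.
End Defs.

(* If some obstacle distance [Dist p q t theta] is at most [d0] for a time
   [t] in [0, T], the interval of the initial partition containing [t] already
   fails the safety check at [theta]: the distance moves by at most
   [L1 * len / 2] between [t] and the midpoint, and [psi] dominates that.

   Otherwise compactness gives a clearance [d0 + dl <= Dist] on [0, T].  Every
   subdivision happens at a step size [alpha <= eps], and [eps] is multiplied
   by [gamma] at each subdivision, so [alpha] tends to 0.  With clearance, the
   penalty is Lipschitz in [theta] with a constant proportional to the total
   length of the partition, which subdivision preserves; hence all search
   directions are bounded and the trial points converge to [theta], uniformly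
   for the distances on [0, T].  Each subdivision halves an interval and lowers
   the sum of squared lengths by [len ^ 2 / 2], so infinitely many subdivided
   intervals are arbitrarily short.  For such an interval, at a late trial
   point, the check requires [Dist <= d0 + psi len <= d0 + dl / 3] while
   clearance and uniform convergence give [Dist >= d0 + dl / 2]. *)

From HB Require Import structures.
From mathcomp Require Import all_boot all_order all_algebra.
From mathcomp Require Import all_classical all_reals all_analysis.
From mathcomp Require Import ring lra zify.
Import Order.TTheory GRing.Theory Num.Theory.
Import numFieldNormedType.Exports.
Local Open Scope classical_set_scope.
Local Open Scope ring_scope.

Set Implicit Arguments. Unset Strict Implicit. Unset Printing Implicit Defensive.

Lemma near_all_mem (T : Type) (F : set_system T) (FF : Filter F) (A : eqType) (s : seq A)
    (Q : A -> T -> Prop) :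
  (forall a, a \in s -> \forall x \near F, Q a x) -> \forall x \near F, forall a, a \in s -> Q a x.
Proof.
elim: s => [|a s IHs] Qs; first exact: nearW.
have Qa := Qs a (mem_head a s).
have {IHs}Qs' := IHs (fun a' a's => Qs a' (@mem_behead _ (a :: s) a' a's)).
by near=> x => a'; rewrite in_cons => /orP[/eqP->|a's]; [near: x | move: a' a's; near: x].
Unshelve. all: end_near.
Qed.

Section RealFacts.
Variable R : realType.

Lemma finite_upper_bound (I : finType) (f : I -> R) :
  exists2 C, 0 <= C & forall i, f i <= C.
Proof.
exists (\sum_i `|f i|); first by apply: sumr_ge0 => i _.
move=> i; apply: le_trans (ler_norm _) _; rewrite (bigD1 i) //= lerDl.
by apply: sumr_ge0 => j _.
Qed.

Lemma finite_pos_lower_bound (I : finType) (f : I -> R) :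
  (forall i, 0 < f i) -> exists2 e, 0 < e & forall i, e <= f i.
Proof.
move=> f_gt0; exists (\big[Num.min/1]_i f i); last by move=> i; exact: bigmin_le.
by elim/big_rec: _ => // i x _ x_gt0; rewrite lt_min f_gt0.
Qed.

Lemma continuous_segment_bounded (I : finType) (f : I -> R -> R) (a b : R) :
  a <= b -> (forall i, {within `[a, b], continuous (f i)}) ->
  exists C, forall i t, t \in `[a, b] -> `|f i t| <= C.
Proof.
move=> ab fc; have /choice[C CP] : forall i, exists C, forall t, t \in `[a, b] -> `|f i t| <= C.
  move=> i; have [c1 _ fmax] := EVT_max ab (fc i); have [c2 _ fmin] := EVT_min ab (fc i).
  exists (`|f i c1| + `|f i c2|) => t tab; rewrite ler_norml.
  have := fmax t tab; have := fmin t tab; have := ler_norm (f i c1).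
  have := ler_norm (- f i c2); rewrite normrN; have := normr_ge0 (f i c1).
  by have := normr_ge0 (f i c2) => *; apply/andP; split; lra.
have [C' _ C'P] := finite_upper_bound C.
by exists C' => i t tab; exact: le_trans (CP i t tab) (C'P i).
Qed.

Lemma continuous_segment_gt (I : finType) (f : I -> R -> R) (a b y : R) :
  a <= b -> (forall i, {within `[a, b], continuous (f i)}) ->
  (forall i t, t \in `[a, b] -> y < f i t) ->
  exists2 e, 0 < e & forall i t, t \in `[a, b] -> y + e <= f i t.
Proof.
move=> ab fc f_gt.
have /choice[c cP] : forall i, exists c,
    c \in `[a, b] /\ forall t, t \in `[a, b] -> f i c <= f i t.
  by move=> i; have [c ci cmin] := EVT_min ab (fc i); exists c.
have [e e_gt0 eP] : exists2 e, 0 < e & forall i, e <= f i (c i) - y.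
  by apply: finite_pos_lower_bound => i; rewrite subr_gt0; exact/f_gt/(cP i).1.
by exists e => // i t tab; have := eP i; have := (cP i).2 t tab; lra.
Qed.

Lemma dq_norm_le (h x C : R) : h != 0 -> (`|h^-1 *: x| <= C) = (`|x| <= C * `|h|).
Proof. by move=> h_neq0; rewrite normrZ normrV ?unitfE // mulrC ler_pdivrMr // normr_gt0. Qed.

Lemma segment_grid (T : R) (N : nat) (t : R) : (0 < N)%N -> 0 <= t <= T ->
  exists j : 'I_N.+1, `|t - j%:R * (T / N%:R)| <= T / N%:R.
Proof.
move=> N_gt0 /andP[t_ge0 tT]; set h := T / N%:R.
have N_neq0 : N%:R != 0 :> R by rewrite pnatr_eq0 -lt0n.
have [|j /andP[jN tj] j_min] := ex_minnP (_ : exists j, (j <= N)%N && (t <= j%:R * h)).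
  by exists N; rewrite leqnn /h mulrC divfK.
have h_ge0 : 0 <= h by rewrite /h divr_ge0 ?ler0n //; exact: le_trans tT.
exists (Ordinal (jN : (j < N.+1)%N)); rewrite /= ler_norml; apply/andP; split; last by lra.
case: j jN tj j_min => [|k] kN tk k_min; first by rewrite mul0r subr0; lra.
have : ~~ (t <= k%:R * h) by apply/negP => tk'; have := k_min k; rewrite (ltnW kN) tk' ltnn => /(_ isT).
by rewrite -ltNge -natr1 mulrDl mul1r; lra.
Qed.

Lemma lipschitz_segment_of_derive (f : R -> R) (a b C : R) :
  (forall x, a <= x <= b -> derivable f x 1) ->
  (forall x, a <= x <= b -> `|'D_1 f x| <= C) ->
  forall x y, a <= x <= b -> a <= y <= b -> `|f x - f y| <= C * `|x - y|.
Proof.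
move=> f_der f'_le.
suff lip_le x y : a <= x <= b -> a <= y <= b -> x <= y -> `|f x - f y| <= C * `|x - y|.
  move=> x y xab yab; have [xy|yx] := leP x y; first exact: lip_le.
  by rewrite distrC [`|x - y|]distrC; apply: lip_le => //; exact: ltW.
move=> /andP[ax xb] /andP[ay yb] xy.
have in_ab z : x <= z <= y -> a <= z <= b.
  by move=> /andP[xz zy]; rewrite (le_trans ax xz) (le_trans zy yb).
have df z : z \in `]x, y[ -> is_derive z 1 f ('D_1 f z).
  rewrite in_itv /= => /andP[xz zy]; apply/derivableP/f_der/in_ab.
  by rewrite !ltW.
have fc : {within `[x, y], continuous f}.
  by apply: derivable_within_continuous => z; rewrite in_itv /= => /in_ab/f_der.
rewrite distrC; have [z xzy ->] := MVT_segment xy df fc.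
rewrite normrM distrC ler_wpM2r //; apply/f'_le/in_ab.
by move: xzy; rewrite in_itv.
Qed.

Lemma dq_le_derive_norm (V : normedModType R) (f : V -> R) (a v : V) :
  derivable f a v ->
  \forall h \near 0^', `|h^-1 *: (f (h *: v + a) - f a)| <= `|'D_v f a| + 1.
Proof.
move=> /cvgrPdist_lt /(_ 1 ltr01); apply: filterS => h /ltW /=.
set D := lim _; set q := h^-1 *: _ => Dq_le1.
have := ler_normB D (D - q); rewrite opprB addrC subrK; lra.
Qed.

(* ['D_v f a] is [0] when the difference quotients diverge. *)
Lemma derive_norm_le (V : normedModType R) (f : V -> R) (a v : V) (C : R) :
  (\forall h \near 0^', `|h^-1 *: (f (h *: v + a) - f a)| <= C) -> `|'D_v f a| <= C.
Proof.
move=> dq_le; have C_ge0 : 0 <= C.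
  have [h /= /(le_trans (normr_ge0 _))] := filter_ex dq_le; exact.
rewrite /derive; set g := fun h : R => _.
have [/= g_cvg|g_ncvg] := pselect (cvg (g @ 0^')).
  rewrite ler_norml; apply/andP; split.
    by apply: limr_ge => //; apply: filterS dq_le => h; rewrite ler_norml => /andP[].
  by apply: limr_le => //; apply: filterS dq_le => h; rewrite ler_norml => /andP[].
suff -> : lim (g @ 0^') = 0 by rewrite normr0.
by rewrite /lim /lim_in getPN //= => l gl; apply: g_ncvg; exact: cvgP gl.
Qed.

End RealFacts.

Lemma finitely_many_drops (R : realType) (u : nat -> R) (A : pred nat) (c : R) (N : nat) :
  0 < c -> (forall m, 0 <= u m) -> nonincreasing_seq u ->
  (forall m, (N <= m)%N -> A m -> u m.+1 <= u m - c) ->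
  ~ (forall N', exists m, (N' <= m)%N /\ A m).
Proof.
move=> c_gt0 u_ge0 u_noninc u_drop A_often.
have descent j : exists2 m, (N <= m)%N & u m <= u N - j%:R * c.
  elim: j => [|j [m Nm um]]; first by exists N; rewrite // mul0r subr0.
  have [m' [mm' Am']] := A_often m; exists m'.+1; first by lia.
  have := u_drop m' (leq_trans Nm mm') Am'; have := u_noninc _ _ mm'.
  by rewrite -natr1 mulrDl mul1r; lra.
have uNc_ge0 : 0 <= u N / c by rewrite divr_ge0 // ltW.
have [m _] := descent (Num.Def.archi_bound (u N / c)); have := u_ge0 m.
by have := archi_boundP uNc_ge0; rewrite ltr_pdivrMr //; lra.
Qed.

Lemma psi_small (R : realType) (L1 L2 eta e : R) : 0 < L2 -> 0 < eta -> 0 < e ->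
  exists2 l, 0 < l & forall x, 0 <= x <= l -> psi L1 L2 eta x <= e.
Proof.
move=> L2_gt0 eta_gt0 e_gt0.
have L1_gt0 : 0 < `|L1| + 1 by rewrite ltr_pwDr.
set l1 := e / (`|L1| + 1); set l2 := (e / 2 / L2) `^ eta^-1.
have l1_gt0 : 0 < l1 by rewrite divr_gt0.
have l2_gt0 : 0 < l2 by rewrite powR_gt0 // !divr_gt0.
exists (Num.min l1 l2) => [|x /andP[x_ge0]]; first by rewrite lt_min l1_gt0.
rewrite le_min => /andP[xl1 xl2].
have pow_le : L2 * x `^ eta <= e / 2.
  have : x `^ eta <= l2 `^ eta by apply: ge0_ler_powR; rewrite ?nnegrE ?(ltW eta_gt0) ?(ltW l2_gt0).
  rewrite -powRrM mulVf ?gt_eqF // powRr1; last by rewrite ltW // !divr_gt0.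
  by move=> ?; rewrite mulrC -ler_pdivlMr.
have lin_le : L1 * x <= e.
  apply: le_trans (ler_norm _) _; rewrite normrM (ger0_norm x_ge0).
  apply: le_trans (ler_wpM2l (normr_ge0 L1) xl1) _.
  rewrite /l1 mulrCA ger_pMr // ler_pdivrMr // mul1r; lra.
by rewrite /psi; lra.
Qed.

Section Partitions.
Variables (R : realType) (T : R).

Lemma is_partition_ge0 (s : seq (R * R)) : is_partition T s ->
  forall k, (k < size s)%N -> 0 <= (nth (0, 0) s k).1.
Proof.
case=> _ s0 _ /(all_nthP (0, 0)) s_lt s_chain; elim=> [|k IHk] ks.
  by rewrite nth0 s0.
by rewrite -s_chain //; have := s_lt k (ltnW ks); have := IHk (ltnW ks); lra.
Qed.

Lemma is_partition_leT (s : seq (R * R)) : is_partition T s ->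
  forall k, (k < size s)%N -> (nth (0, 0) s k).2 <= T.
Proof.
case=> _ _ sT /(all_nthP (0, 0)) s_lt s_chain.
suff leT j k : (k < size s)%N -> (size s - k.+1)%N = j -> (nth (0, 0) s k).2 <= T.
  by move=> k ks; exact: leT _ k ks erefl.
elim: j k => [|j IHj] k ks skj.
  by rewrite (_ : k = (size s).-1) ?nth_last ?sT //; lia.
have k1s : (k.+1 < size s)%N by lia.
by rewrite s_chain //; have := s_lt _ k1s; have := IHj _ k1s ltac:(lia); lra.
Qed.

Lemma is_partition_mem (s : seq (R * R)) : is_partition T s ->
  forall J, J \in s -> [/\ 0 <= J.1, J.1 <= J.2 & J.2 <= T].
Proof.
move=> sP J /(nthP (0, 0)) [k ks <-].
have := is_partition_ge0 sP ks; have := is_partition_leT sP ks.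
case: sP => _ _ _ /(all_nthP (0, 0)) s_lt _; have := s_lt k ks => /= *; split; lra.
Qed.

Lemma is_partition_cover (s : seq (R * R)) : is_partition T s ->
  forall t, 0 <= t <= T -> exists2 J, J \in s & J.1 <= t <= J.2.
Proof.
move=> sP t /andP[t_ge0 tT]; case: (sP) => s_neq0 s0 sT _ s_chain.
have s_gt0 : (0 < size s)%N by case: s s_neq0 {sP s0 sT s_chain}.
have [|k /andP[ks t_le] k_min] := ex_minnP (_ : exists k, (k < size s)%N && (t <= (nth (0, 0) s k).2)).
  by exists (size s).-1; rewrite prednK // leqnn nth_last sT.
exists (nth (0, 0) s k); first exact: mem_nth.
rewrite t_le andbT; case: k ks t_le k_min => [|k] ks t_le k_min; first by rewrite nth0 s0.
rewrite -s_chain //; apply: ltW; rewrite ltNge; apply/negP => t_le'.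
by have := k_min k; rewrite (ltnW ks) t_le' ltnn => /(_ isT).
Qed.

End Partitions.

Section IntervalFamilies.
Context {R : realType} {Pc Ob : finType}.
Implicit Types (pi : ipartition R Pc Ob) (F : R * R -> R).

Definition in_horizon (T : R) pi :=
  forall p q J, J \in pi p q -> [/\ 0 <= J.1, J.1 <= J.2 & J.2 <= T].

Definition sum_intervals pi F := \sum_(x : Pc * Ob) \sum_(J <- pi x.1 x.2) F J.
Definition total_len pi := sum_intervals pi (fun J => `|len J|).
Definition sum_sqr_len pi := sum_intervals pi (fun J => len J ^+ 2).

Lemma len_left_half (I : R * R) : len (I.1, mid I) = len I / 2.
Proof. by rewrite /len /mid /=; field. Qed.

Lemma len_right_half (I : R * R) : len (mid I, I.2) = len I / 2.
Proof. by rewrite /len /mid /=; field. Qed.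

Lemma sum_intervals_subdivide pi p q l F : (l < size (pi p q))%N ->
  let I := nth (0, 0) (pi p q) l in
  sum_intervals (subdivide pi (p, q, l)) F
  = sum_intervals pi F - F I + F (I.1, mid I) + F (mid I, I.2).
Proof.
move=> ls I; have rest_eq : \sum_(x | x != (p, q)) \sum_(J <- subdivide pi (p, q, l) x.1 x.2) F J
    = \sum_(x | x != (p, q)) \sum_(J <- pi x.1 x.2) F J.
  apply: eq_bigr => -[p' q'] /=; rewrite /subdivide.
  by case: ifP => // /andP[/eqP-> /eqP->]; rewrite eqxx.
rewrite /sum_intervals (bigD1 (p, q)) //= rest_eq [in RHS](bigD1 (p, q)) //=.
rewrite /subdivide !eqxx /= -/I.
have -> : \sum_(J <- pi p q) F J = \sum_(J <- take l (pi p q) ++ I :: drop l.+1 (pi p q)) F J.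
  by rewrite -drop_nth // cat_take_drop.
by rewrite !big_cat !big_cons /=; ring.
Qed.

Lemma total_len_subdivide pi p q l : (l < size (pi p q))%N ->
  total_len (subdivide pi (p, q, l)) = total_len pi.
Proof.
move=> ls; rewrite /total_len sum_intervals_subdivide // len_left_half len_right_half.
by rewrite normrM (ger0_norm (_ : 0 <= 2^-1)) //; field.
Qed.

Lemma sum_sqr_len_subdivide pi p q l : (l < size (pi p q))%N ->
  sum_sqr_len (subdivide pi (p, q, l))
  = sum_sqr_len pi - len (nth (0, 0) (pi p q) l) ^+ 2 / 2.
Proof.
by move=> ls; rewrite /sum_sqr_len sum_intervals_subdivide // len_left_half len_right_half; field.
Qed.

Lemma sum_sqr_len_ge0 pi : 0 <= sum_sqr_len pi.
Proof. by apply: sumr_ge0 => x _; apply: sumr_ge0 => J _; exact: sqr_ge0. Qed.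

Lemma in_horizon_subdivide T pi p q l : (l < size (pi p q))%N ->
  in_horizon T pi -> in_horizon T (subdivide pi (p, q, l)).
Proof.
move=> ls piT p' q' J; rewrite /subdivide; case: ifP => [_|_]; last exact: piT.
have [I1_ge0 I12 I2T] := piT p q _ (mem_nth (0, 0) ls).
rewrite !mem_cat !inE /mid => /orP[/mem_take/piT //|/orP[/orP[]/eqP-> /=|/mem_drop/piT //]];
  split; lra.
Qed.

End IntervalFamilies.

Section CoerciveInverse.
Variables (R : realType) (n : nat).
Implicit Types (v w : 'rV[R]_n) (A : 'M[R]_n).

Lemma norm2_ge0 v : 0 <= norm2 v.
Proof. exact: sqrtr_ge0. Qed.

Lemma norm2_sqr v : norm2 v ^+ 2 = \sum_i v 0 i ^+ 2.
Proof. by rewrite /norm2 sqr_sqrtr // sumr_ge0 // => i _; exact: sqr_ge0. Qed.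

Lemma coord_sqr_le_norm2 v i : v 0 i ^+ 2 <= norm2 v ^+ 2.
Proof. by rewrite norm2_sqr (bigD1 i) //= lerDl sumr_ge0 // => j _; exact: sqr_ge0. Qed.

Lemma coord_le_mx_norm v i : `|v 0 i| <= `|v|.
Proof. by rewrite [`|v|]mx_normrE; exact: (le_bigmax _ (fun ij => `|v ij.1 ij.2|) (0, i)). Qed.

Lemma mx_norm_le_norm2 v : `|v| <= norm2 v.
Proof.
rewrite [`|v|]mx_normrE; apply: bigmax_le => [|[i j] _] /=; first exact: norm2_ge0.
rewrite ord1 -sqrtr_sqr; apply: ler_wsqrtr.
by rewrite -norm2_sqr; exact: coord_sqr_le_norm2.
Qed.

Lemma norm2_le_mx_norm v : norm2 v <= n%:R * `|v|.
Proof.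
rewrite -(ler_pXn2r (_ : 0 < 2)%N) ?nnegrE ?norm2_ge0 ?mulr_ge0 // norm2_sqr.
apply: le_trans (_ : \sum_(i < n) `|v| ^+ 2 <= _).
  apply: ler_sum => i _; rewrite -(real_normK (num_real (v 0 i))) lerXn2r ?nnegrE //.
  exact: coord_le_mx_norm.
rewrite sumr_const card_ord -[`|v| ^+ 2 *+ n]mulr_natl exprMn.
apply: ler_wpM2r; first exact: sqr_ge0.
by rewrite -natrX ler_nat; case: n => // k; rewrite expnS expn1 leq_pmulr.
Qed.

Lemma qform_trmx A w : qform A w = \sum_j (w *m A^T) 0 j * w 0 j.
Proof.
have -> : qform A w = ((w *m A *m w^T)^T) 0 0 by rewrite /qform [RHS]mxE.
rewrite !trmx_mul trmxK mulmxA mxE.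
by apply: eq_bigr => j _; rewrite [w^T _ _]mxE.
Qed.

Section Coercive.
Variables (A : 'M[R]_n) (beta : R).
Hypothesis beta_gt0 : 0 < beta.
Hypothesis A_coercive : forall v, beta * norm2 v ^+ 2 <= qform A v.

Lemma coercive_unitmx : A \in unitmx.
Proof.
rewrite unitmxE unitfE; apply/negP => /det0P [v v_neq0 vA].
have := A_coercive v; rewrite /qform vA mul0mx mxE pmulr_rle0 // => v_le0.
move/negP: v_neq0; apply; apply/eqP/rowP => j; rewrite mxE.
apply/eqP; rewrite -sqrf_eq0 eq_le sqr_ge0 andbT.
exact: le_trans (coord_sqr_le_norm2 v j) v_le0.
Qed.

Lemma coercive_norm2_le w : beta * norm2 w <= norm2 (w *m A^T).
Proof.
set d1 := w *m A^T.
have amgm j : d1 0 j * w 0 j <= d1 0 j ^+ 2 / (2 * beta) + beta * w 0 j ^+ 2 / 2.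
  rewrite -subr_ge0; set x := d1 0 j; set y := w 0 j.
  have -> : x ^+ 2 / (2 * beta) + beta * y ^+ 2 / 2 - x * y = (x - beta * y) ^+ 2 / (2 * beta).
    by field; rewrite gt_eqF.
  by rewrite divr_ge0 ?sqr_ge0 // mulr_ge0 // ltW.
have : beta * norm2 w ^+ 2 <= norm2 d1 ^+ 2 / (2 * beta) + beta * norm2 w ^+ 2 / 2.
  apply: le_trans (A_coercive w) _; rewrite qform_trmx !norm2_sqr mulr_sumr !mulr_suml.
  by rewrite -big_split; apply: ler_sum => j _; exact: amgm.
move=> ineq; rewrite -(ler_pXn2r (_ : 0 < 2)%N) ?nnegrE ?mulr_ge0 ?norm2_ge0 ?(ltW beta_gt0) //.
have -> : norm2 d1 ^+ 2 = (norm2 d1 ^+ 2 / (2 * beta)) * (2 * beta) by field; rewrite gt_eqF.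
move: ineq; rewrite exprMn; set D := _ / (2 * beta); set W := norm2 w ^+ 2 => ineq.
have -> : beta ^+ 2 * W = beta * W / 2 * (2 * beta) by field.
by apply: ler_wpM2r; [rewrite mulr_ge0 // ltW | lra].
Qed.

Lemma coercive_solve_norm (d1 : 'rV[R]_n) : `|d1 *m (invmx A)^T| <= n%:R * `|d1| / beta.
Proof.
set w := d1 *m (invmx A)^T.
have wA : w *m A^T = d1 by rewrite /w -mulmxA -trmx_mul mulmxV ?coercive_unitmx // trmx1 mulmx1.
apply: le_trans (mx_norm_le_norm2 w) _; rewrite ler_pdivlMr // mulrC.
by apply: le_trans (coercive_norm2_le w) _; rewrite wA; exact: norm2_le_mx_norm.
Qed.

End Coercive.
End CoerciveInverse.

Section LineSearch.
Variables (R : realType) (n : nat) (Pc Ob : finType).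
Variables (b : Pc -> R -> 'rV[R]_n -> set 'rV[R]_3) (o : Ob -> set 'rV[R]_3).
Variables (T d0 mu L1 L2 eta c alpha0 gamma eps_in beta : R).
Variables (P : R -> R) (O : 'rV[R]_n -> R) (newton : bool) (M : 'M[R]_n -> 'M[R]_n).
Variables (pi0 : ipartition R Pc Ob) (theta : 'rV[R]_n).
Variables (part : nat -> ipartition R Pc Ob) (eps alpha : nat -> R).
Variables (d : nat -> 'rV[R]_n) (chk : nat -> option (Pc * Ob * nat)).

Hypothesis run : LS_run b o d0 P O mu L1 L2 eta c newton M alpha0 gamma eps_in pi0 theta
  part eps alpha d chk.
Hypothesis alpha0_gt0 : 0 < alpha0.
Hypothesis gamma01 : 0 < gamma < 1.
Hypothesis subdivides_often : forall N, exists m, (N <= m)%N /\ subdivides_at eps alpha chk m.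

Definition splits m := if chk m is Some _ then alpha m <= eps m else false.

Definition trial m := theta + alpha m *: d m.

Definition split_len m :=
  if chk m is Some (p, q, l) then len (nth (0, 0) (part m p q) l) else 0.

Lemma splitsP m : subdivides_at eps alpha chk m <-> splits m.
Proof.
rewrite /subdivides_at /splits; case: (chk m) => [tau|]; split; first by case.
- by split=> //; exists tau.
- by case=> -[].
- by [].
Qed.

Lemma splits_often N : exists2 m, (N <= m)%N & splits m.
Proof. by have [m [Nm /splitsP]] := subdivides_often N; exists m. Qed.

Lemma run_check m :
  if chk m is Some tau then unsafe_tuple b o d0 L1 L2 eta (part m) (trial m) tau else True.
Proof. by case: run => _ _ _ _ /(_ m) [+ _ _]; case: (chk m). Qed.

Lemma run_step m :
  if splits m then
    [/\ eps m.+1 = gamma * eps m, d m.+1 = direction b o d0 P O mu newton M (part m.+1) theta,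
        alpha m.+1 = alpha m &
        exists2 tau, chk m = Some tau & part m.+1 = subdivide (part m) tau]
  else [/\ eps m.+1 = eps m, d m.+1 = d m, alpha m.+1 = gamma * alpha m &
           part m.+1 = part m].
Proof.
case: run => _ _ _ _ /(_ m) [_ _]; rewrite /splits; case: (chk m) => [tau|]; last by case.
by case: ifP => _ [-> -> -> ->]; split=> //; exists tau.
Qed.

Lemma eps_step m : eps m.+1 = if splits m then gamma * eps m else eps m.
Proof. by have := run_step m; case: splits => -[]. Qed.

Lemma alpha_step m : alpha m.+1 = if splits m then alpha m else gamma * alpha m.
Proof. by have := run_step m; case: splits => -[]. Qed.

Lemma part_step m : ~~ splits m -> part m.+1 = part m.
Proof. by have := run_step m; case: splits => -[]. Qed.

Lemma part_split m : splits m -> exists p q l,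
  [/\ chk m = Some (p, q, l), (l < size (part m p q))%N,
      part m.+1 = subdivide (part m) (p, q, l) &
      split_len m = len (nth (0, 0) (part m p q) l)].
Proof.
move=> sm; have := run_step m; rewrite sm => -[_ _ _ [[[p q] l] chk_m ->]].
have := run_check m; rewrite chk_m => -[ls _].
by exists p, q, l; rewrite /split_len chk_m.
Qed.

Lemma d_direction m : exists k, d m = direction b o d0 P O mu newton M (part k) theta.
Proof.
case: run => p0 _ _ d0E _; elim: m => [|m [k dmE]]; first by exists 0%N; rewrite d0E p0.
by have := run_step m; case: splits => -[_ ->]; [exists m.+1 | exists k].
Qed.

Lemma alpha_gt0 m : 0 < alpha m.
Proof.
case: run => _ _ a0 _ _; case/andP: gamma01 => g_gt0 _.
elim: m => [|m IHm]; first by rewrite a0.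
by rewrite alpha_step; case: splits => //; rewrite mulr_gt0.
Qed.

Lemma alpha_nonincreasing : nonincreasing_seq alpha.
Proof.
apply/nonincreasing_seqP => m; rewrite alpha_step; case: splits => //.
by case/andP: gamma01 => _ g_lt1; rewrite ler_piMl ?ltW ?alpha_gt0.
Qed.

Lemma eps_gamma_pow m : exists k, eps m = gamma ^+ k * eps_in.
Proof.
case: run => _ e0 _ _ _; elim: m => [|m [k em]]; first by exists 0%N; rewrite e0 mul1r.
by rewrite eps_step; case: splits; [exists k.+1; rewrite em exprS mulrA | exists k].
Qed.

Lemma eps_in_gt0 : 0 < eps_in.
Proof.
have [m _] := splits_often 0; rewrite /splits; case: (chk m) => // _ am.
have [k em] := eps_gamma_pow m; have := lt_le_trans (alpha_gt0 m) am.
by case/andP: gamma01 => g_gt0 _; rewrite em pmulr_rgt0 // exprn_gt0.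
Qed.

Lemma eps_nonincreasing : nonincreasing_seq eps.
Proof.
apply/nonincreasing_seqP => m; rewrite eps_step; case: splits => //.
have [k ->] := eps_gamma_pow m; case/andP: gamma01 => g_gt0 g_lt1.
by rewrite ler_piMl ?ltW // mulr_gt0 ?exprn_gt0 ?eps_in_gt0.
Qed.

Lemma eps_geometric j : exists m, eps m <= gamma ^+ j * eps_in.
Proof.
case: run => _ e0 _ _ _; case/andP: gamma01 => g_gt0 _.
elim: j => [|j [m em]]; first by exists 0%N; rewrite e0 mul1r.
have [m' mm' sm'] := splits_often m; exists m'.+1.
by rewrite eps_step sm' exprS -mulrA ler_pM2l //; exact: le_trans (eps_nonincreasing mm') em.
Qed.

Lemma alpha_small e : 0 < e -> \forall m \near \oo, alpha m <= e.
Proof.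
move=> e_gt0; have gamma_lt1 : `|gamma| < 1 by case/andP: gamma01 => g0 g1; rewrite gtr0_norm.
have [j /= gj] := filter_ex (cvgr_lt 0 (cvg_expr gamma_lt1) _ (divr_gt0 e_gt0 eps_in_gt0)).
have [m em] := eps_geometric j; have [m' mm' sm'] := splits_often m.
exists m' => // k /= m'k; apply: le_trans (alpha_nonincreasing m'k) _.
move: sm'; rewrite /splits; case: (chk m') => // _ /le_trans; apply.
apply: le_trans (eps_nonincreasing mm') _; apply: le_trans em _.
by rewrite -ler_pdivlMr ?eps_in_gt0 // ltW.
Qed.

Hypothesis pi0_partition : forall p q, is_partition T (pi0 p q).

Lemma part_in_horizon m : in_horizon T (part m) /\ total_len (part m) = total_len pi0.
Proof.
case: run => p0 _ _ _ _; elim: m => [|m [hm tm]].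
  by rewrite p0; split=> // p q; exact: is_partition_mem.
case sm: (splits m); last by rewrite part_step ?sm.
have [p [q [l [_ ls -> _]]]] := part_split sm.
by rewrite total_len_subdivide //; split=> //; exact: in_horizon_subdivide.
Qed.

Lemma sum_sqr_len_nonincreasing : nonincreasing_seq (sum_sqr_len \o part).
Proof.
apply/nonincreasing_seqP => m /=; case sm: (splits m); last by rewrite part_step ?sm.
have [p [q [l [_ ls -> _]]]] := part_split sm.
by rewrite sum_sqr_len_subdivide // gerBl divr_ge0 // sqr_ge0.
Qed.

Lemma short_splits l0 : 0 < l0 -> forall N, exists m, [/\ (N <= m)%N, splits m & `|split_len m| < l0].
Proof.
move=> l0_gt0 N; apply: contrapT => no_short.
have drop m : (N <= m)%N -> splits m ->
    sum_sqr_len (part m.+1) <= sum_sqr_len (part m) - l0 ^+ 2 / 2.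
  move=> Nm sm; have [p [q [l [_ ls -> slE]]]] := part_split sm.
  rewrite sum_sqr_len_subdivide // -slE lerB // ler_pM2r // -(real_normK (num_real (split_len m))).
  rewrite lerXn2r ?nnegrE ?(ltW l0_gt0) // leNgt; apply/negP => short; apply: no_short.
  by exists m.
apply: (finitely_many_drops (u := sum_sqr_len \o part) (A := splits) (c := l0 ^+ 2 / 2) (N := N)).
- by rewrite divr_gt0 // exprn_gt0.
- by move=> m; exact: sum_sqr_len_ge0.
- exact: sum_sqr_len_nonincreasing.
- exact: drop.
- by move=> N'; have [m Nm sm] := splits_often N'; exists m.
Qed.

Hypothesis T_gt0 : 0 < T.
Hypothesis Dist_smooth :
  forall p q, twice_diff (fun z : R * 'rV[R]_n => Dist b o p q z.1 z.2).
Hypothesis Dist_lipschitz : forall p q t1 t2 th,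
  `|Dist b o p q t1 th - Dist b o p q t2 th| <= L1 * `|t1 - t2|.

Lemma L1_ge0 (p : Pc) (q : Ob) : 0 <= L1.
Proof.
have := Dist_lipschitz p q 1 0 theta; rewrite subr0 normr1 mulr1.
exact: le_trans (normr_ge0 _).
Qed.

Lemma Dist_continuous_t p q th : continuous (fun t => Dist b o p q t th).
Proof.
move=> t; apply: (@continuous_comp _ _ _ (fun t => (t, th)) (fun z => Dist b o p q z.1 z.2)).
  exact/differentiable_continuous/differentiable_pair.
exact/differentiable_continuous/(Dist_smooth p q).1.
Qed.

Lemma Dist_continuous_th p q t : continuous (fun th => Dist b o p q t th).
Proof.
move=> th; apply: (@continuous_comp _ _ _ (fun th => (t, th)) (fun z => Dist b o p q z.1 z.2)).
  exact/differentiable_continuous/differentiable_pair.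
exact/differentiable_continuous/(Dist_smooth p q).1.
Qed.

Lemma Dist_clearance : (forall p q t, 0 <= t <= T -> d0 < Dist b o p q t theta) ->
  exists2 dl, 0 < dl & forall p q t, 0 <= t <= T -> d0 + dl <= Dist b o p q t theta.
Proof.
move=> clear; have [dl dl_gt0 dlP] : exists2 dl, 0 < dl &
    forall (x : Pc * Ob) t, t \in `[0, T] -> d0 + dl <= Dist b o x.1 x.2 t theta.
  apply: continuous_segment_gt (ltW T_gt0) _ _ => [x|x t].
    exact/continuous_subspaceT/Dist_continuous_t.
  by rewrite in_itv /=; exact: clear.
by exists dl => // p q t tT; apply: (dlP (p, q)); rewrite in_itv.
Qed.

Lemma Dist_bounded : exists Dm, forall p q t, 0 <= t <= T -> Dist b o p q t theta <= Dm.
Proof.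
have [Dm DmP] := continuous_segment_bounded
  (f := fun x : Pc * Ob => fun t => Dist b o x.1 x.2 t theta) (ltW T_gt0)
  (fun x => continuous_subspaceT (@Dist_continuous_t x.1 x.2 theta)).
exists Dm => p q t tT; apply: le_trans (ler_norm _) (DmP (p, q) t _).
by rewrite in_itv.
Qed.

Lemma pair_shift (h t : R) (e th : 'rV[R]_n) : h *: ((0 : R), e) + (t, th) = (t, h *: e + th).
Proof.
have -> : h *: ((0 : R), e) + (t, th) = (h *: 0 + t, h *: e + th) by [].
by rewrite scaler0 add0r.
Qed.

Lemma Dist_dq_bound : exists2 G, 0 <= G & forall p q (i : 'I_n) t, 0 <= t <= T ->
  \forall h \near 0^', `|Dist b o p q t (h *: evec R i + theta) - Dist b o p q t theta|
                        <= G * `|h|.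
Proof.
pose F (x : Pc * Ob * 'I_n) (z : R * 'rV[R]_n) := Dist b o x.1.1 x.1.2 z.1 z.2.
pose D (x : Pc * Ob * 'I_n) t := 'D_((0 : R), evec R x.2) (F x) (t, theta).
have Dc x : continuous (D x).
  move=> t; apply: (@continuous_comp _ _ _ (fun t => (t, theta)) ('D_((0 : R), evec R x.2) (F x))).
    exact/differentiable_continuous/differentiable_pair.
  exact/differentiable_continuous/(Dist_smooth _ _).2.
have [C CP] := continuous_segment_bounded (ltW T_gt0) (fun x => continuous_subspaceT (Dc x)).
exists (`|C| + 1) => // p q i t tT.
have Dder := diff_derivable (v := ((0 : R), evec R i)) ((Dist_smooth p q).1 (t, theta)).
near=> h; rewrite -dq_norm_le; last by near: h; exact: nbhs_dnbhs_neq.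
have : `|D (p, q, i) t| <= `|C| by apply: le_trans (CP _ t _) (ler_norm _); rewrite in_itv.
suff : `|h^-1 *: (Dist b o p q t (h *: evec R i + theta) - Dist b o p q t theta)|
          <= `|D (p, q, i) t| + 1 by lra.
near: h; apply: filterS (dq_le_derive_norm Dder) => h.
by rewrite pair_shift.
Unshelve. all: end_near.
Qed.

(* Equicontinuity in [t] reduces uniform convergence to the grid times [j * T / N]. *)
Lemma Dist_unif_cvg (th : nat -> 'rV[R]_n) : th m @[m --> \oo] --> theta ->
  forall e, 0 < e -> \forall m \near \oo, forall p q t, 0 <= t <= T ->
    `|Dist b o p q t (th m) - Dist b o p q t theta| <= e.
Proof.
move=> th_cvg e e_gt0; pose N := (Num.Def.archi_bound (4 * `|L1| * T / e)).+1.
have N_gt0 : 0 < N%:R :> R by rewrite ltr0n.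
set h := T / N%:R.
have Lh_le : 2 * (`|L1| * h) <= e / 2.
  have : 4 * `|L1| * T / e < N%:R.
    have x_ge0 : 0 <= 4 * `|L1| * T / e.
      by rewrite !mulr_ge0 // ?invr_ge0 ltW.
    by apply: lt_le_trans (archi_boundP x_ge0) _; rewrite ler_nat.
  rewrite ltr_pdivrMr // /h => LT_lt.
  have -> : 2 * (`|L1| * (T / N%:R)) = 4 * `|L1| * T / N%:R / 2 by field; rewrite gt_eqF.
  by rewrite ler_pM2r ?invr_gt0 // ler_pdivrMr // [e * _]mulrC; exact: ltW.
have grid_cvg : \forall m \near \oo, forall x : Pc * Ob * 'I_N.+1,
    `|Dist b o x.1.1 x.1.2 (x.2%:R * h) (th m) - Dist b o x.1.1 x.1.2 (x.2%:R * h) theta|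
    < e / 2.
  apply: filter_forall => -[[p q] j].
  have := (cvgrPdist_lt _ _).1 (cvg_comp _ _ th_cvg (@Dist_continuous_th p q (j%:R * h) theta)).
  by move=> /(_ _ (e / 2) (divr_gt0 e_gt0 (ltr0n _ 2))); apply: filterS => m /=; rewrite distrC.
apply: filterS grid_cvg => m grid_m p q t tT.
have [j tj] := segment_grid (N := N) (ltn0Sn _) tT; have /= := grid_m (p, q, j).
move: (Dist_lipschitz p q t (j%:R * h) (th m)) (Dist_lipschitz p q (j%:R * h) t theta).
rewrite [`|j%:R * h - t|]distrC.
have L1h : L1 * `|t - j%:R * h| <= `|L1| * h.
  by apply: le_trans (ler_norm _) _; rewrite normrM normr_id ler_wpM2l.
set A := Dist _ _ _ _ t (th m); set B := Dist _ _ _ _ _ (th m).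
set C' := Dist _ _ _ _ (_ * h) theta; set D := Dist _ _ _ _ t theta => AB CD BC.
have := ler_distD B A D; have := ler_distD C' B D; lra.
Qed.

Hypothesis P_smooth : forall x, 0 < x -> derivable P x 1 /\ derivable ('D_1 P) x 1.
Hypothesis O_smooth : twice_diff O.
Hypothesis beta_gt0 : 0 < beta.
Hypothesis M_coercive : forall H v, beta * norm2 v ^+ 2 <= qform (M H) v.
Hypothesis L2_gt0 : 0 < L2.
Hypothesis eta_gt0 : 0 < eta.

Lemma P_lipschitz (a a' : R) : 0 < a -> a <= a' -> exists2 Lp, 0 <= Lp &
  forall x y, a <= x <= a' -> a <= y <= a' -> `|P x - P y| <= Lp * `|x - y|.
Proof.
move=> a_gt0 aa'; have pos x : a <= x -> 0 < x by exact: lt_le_trans a_gt0.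
have P'c : {within `[a, a'], continuous ('D_1 P)}.
  by apply: derivable_within_continuous => x; rewrite in_itv /= => /andP[/pos/P_smooth[]].
have [C CP] := continuous_segment_bounded (f := fun _ : unit => 'D_1 P) aa' (fun _ => P'c).
exists C; first by apply: le_trans (CP tt a _); rewrite // in_itv /= lexx.
apply: lipschitz_segment_of_derive => x /andP[ax xa']; first by case: (P_smooth (pos x ax)).
by apply: (CP tt); rewrite in_itv /= ax.
Qed.

Definition penalty pi th := \sum_(x : Pc * Ob) \sum_(J <- pi x.1 x.2)
  len J * P (Dist b o x.1 x.2 (mid J) th - d0).

Lemma EobjE pi th : Eobj b o d0 P O mu pi th = O th + mu * penalty pi th.
Proof. by rewrite /Eobj /penalty pair_bigA. Qed.

Lemma direction_norm_le pi th :
  `|direction b o d0 P O mu newton M pi th|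
  <= (1 + n%:R / beta) * `|grad (Eobj b o d0 P O mu pi) th|.
Proof.
rewrite /direction; set g := grad _ _.
have g_ge0 := normr_ge0 g; have nb_ge0 : 0 <= n%:R / beta by rewrite divr_ge0 // ltW.
case: newton; last by rewrite normrN ler_peMl // lerDl.
apply: le_trans (coercive_solve_norm beta_gt0 (M_coercive _) (- g)) _.
by rewrite normrN mulrAC ler_wpM2r // lerDr.
Qed.

Lemma touching_unsafe p q t : 0 <= t <= T -> Dist b o p q t theta <= d0 ->
  ~ safe b o d0 L1 L2 eta pi0 theta.
Proof.
move=> tT touch pi0_safe.
have [J J_in /andP[J1t tJ2]] := is_partition_cover (pi0_partition p q) tT.
apply: (pi0_safe (p, q, index J (pi0 p q))); split; first by rewrite index_mem.
rewrite nth_index //; have L1_ge0 := L1_ge0 p q.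
have mid_t : `|mid J - t| <= len J / 2.
  by rewrite /mid /len ler_norml; apply/andP; split; lra.
have := ler_wpM2l L1_ge0 mid_t; rewrite mulrA.
have := Dist_lipschitz p q (mid J) t theta.
have := ler_norm (Dist b o p q (mid J) theta - Dist b o p q t theta).
have : 0 <= L2 * len J `^ eta by rewrite mulr_ge0 ?powR_ge0 ?ltW.
by rewrite /psi; lra.
Qed.

Section Clearance.
Variable dl : R.
Hypothesis dl_gt0 : 0 < dl.
Hypothesis clearance : forall p q t, 0 <= t <= T -> d0 + dl <= Dist b o p q t theta.

Lemma penalty_dq_bound : exists2 K, 0 <= K & forall pi, in_horizon T pi -> forall i : 'I_n,
  \forall h \near 0^', `|penalty pi (h *: evec R i + theta) - penalty pi theta|
                        <= K * `|h| * total_len pi.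
Proof.
have [Dm DmP] := Dist_bounded.
have [Lp Lp_ge0 LpP] : exists2 Lp, 0 <= Lp & forall x y,
    dl / 2 <= x <= `|Dm - d0| + dl -> dl / 2 <= y <= `|Dm - d0| + dl ->
    `|P x - P y| <= Lp * `|x - y|.
  by apply: P_lipschitz; [rewrite divr_gt0 // | have := normr_ge0 (Dm - d0); have := dl_gt0; lra].
have [G G_ge0 GP] := Dist_dq_bound.
exists (Lp * G) => [|pi pi_hor i]; first exact: mulr_ge0.
have mid_in x J : J \in pi x.1 x.2 -> 0 <= mid J <= T.
  by move=> /pi_hor[J1 J12 J2]; rewrite /mid; apply/andP; split; lra.
have near_J : \forall h \near 0^', forall x : Pc * Ob, forall J, J \in pi x.1 x.2 ->
    `|Dist b o x.1 x.2 (mid J) (h *: evec R i + theta) - Dist b o x.1 x.2 (mid J) theta|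
    <= G * `|h|.
  apply: filter_forall => x; apply: near_all_mem => J /mid_in; exact: GP.
have small_h : \forall h \near (0 : R)^', G * `|h| <= dl / 2.
  have G1_gt0 : 0 < 2 * (G + 1) by rewrite mulr_gt0 // ltr_pwDr.
  have r_gt0 : 0 < dl / (2 * (G + 1)) by rewrite divr_gt0.
  apply: filterS (dnbhs0_lt r_gt0) => h.
  by rewrite ltr_pdivlMr // => h_lt; have := normr_ge0 h; nra.
near=> h; have hJ : forall (x : Pc * Ob) J, J \in pi x.1 x.2 ->
    `|Dist b o x.1 x.2 (mid J) (h *: evec R i + theta) - Dist b o x.1 x.2 (mid J) theta|
    <= G * `|h| by near: h.
have hG : G * `|h| <= dl / 2 by near: h.
rewrite /penalty /total_len /sum_intervals -sumrB mulr_sumr.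
apply: le_trans (ler_norm_sum _ _ _) _; apply: ler_sum => x _.
rewrite -sumrB mulr_sumr; apply: le_trans (ler_norm_sum _ _ _) _.
rewrite big_seq_cond [leRHS]big_seq_cond; apply: ler_sum => J /andP[J_in _].
rewrite -mulrBr normrM mulrC; apply: ler_wpM2r => //.
have lo := clearance x.1 x.2 (mid_in x J J_in); have hi := DmP x.1 x.2 (mid J) (mid_in x J J_in).
move: (hJ x J J_in) (ler_norm (Dm - d0)).
set D1 := Dist _ _ _ _ _ (_ + _); set D0 := Dist _ _ _ _ _ theta => dD Dm_le.
have /andP[dD1 dD2] : - (dl / 2) <= D1 - D0 <= dl / 2 by rewrite -ler_norml; lra.
apply: le_trans (LpP (D1 - d0) (D0 - d0) _ _) _; try by apply/andP; split; lra.
by rewrite -mulrA ler_wpM2l // (_ : D1 - d0 - (D0 - d0) = D1 - D0) //; ring.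
Unshelve. all: end_near.
Qed.

Lemma grad_Eobj_bound : exists C1 C2, forall pi, in_horizon T pi ->
  `|grad (Eobj b o d0 P O mu pi) theta| <= C1 + C2 * total_len pi.
Proof.
have [K K_ge0 KP] := penalty_dq_bound.
have [C1 C1_ge0 C1P] := finite_upper_bound (fun i : 'I_n => `|'D_(evec R i) O theta| + 1).
exists C1, (`|mu| * K) => pi pi_hor.
have tl_ge0 : 0 <= total_len pi by apply: sumr_ge0 => x _; apply: sumr_ge0.
rewrite [`|_|]mx_normrE; apply: bigmax_le => [|[i0 i] _] /=.
  by rewrite addr_ge0 // !mulr_ge0.
rewrite ord1 mxE; apply: derive_norm_le.
have dqO := dq_le_derive_norm (diff_derivable (v := evec R i) (O_smooth.1 theta)).
near=> h; have h_neq0 : h != 0 by near: h; exact: nbhs_dnbhs_neq.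
rewrite !EobjE (_ : _ + _ - _ = O (h *: evec R i + theta) - O theta
    + mu * (penalty pi (h *: evec R i + theta) - penalty pi theta)); last by ring.
rewrite scalerDr; apply: le_trans (ler_normD _ _) _; apply: lerD.
  by apply: le_trans (C1P i); near: h.
rewrite dq_norm_le // normrM -!mulrA; apply: ler_wpM2l => //.
by rewrite [total_len pi * _]mulrC mulrA; near: h; exact: KP.
Unshelve. all: end_near.
Qed.

Lemma d_bounded : exists D, forall m, `|d m| <= D.
Proof.
have [C1 [C2 CP]] := grad_Eobj_bound.
exists ((1 + n%:R / beta) * (C1 + C2 * total_len pi0)) => m.
have [k ->] := d_direction m; have [k_hor k_tl] := part_in_horizon k.
apply: le_trans (direction_norm_le _ _) _; rewrite -k_tl ler_wpM2l ?CP //.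
by rewrite addr_ge0 // divr_ge0 // ltW.
Qed.

Lemma trial_cvg : trial m @[m --> \oo] --> theta.
Proof.
have [D DP] := d_bounded; apply/cvgrPdist_le => e e_gt0.
have D1_gt0 : 0 < `|D| + 1 by rewrite ltr_pwDr.
near=> m; rewrite /trial opprD addrA subrr sub0r normrN normrZ gtr0_norm ?alpha_gt0 //.
have am : alpha m <= e / (`|D| + 1) by near: m; apply: alpha_small; rewrite divr_gt0.
apply: le_trans (ler_pM (ltW (alpha_gt0 m)) (normr_ge0 _) am (le_trans (DP m) (ler_norm D))) _.
by rewrite mulrAC ler_pdivrMr // ler_pM2l // lerDl.
Unshelve. all: end_near.
Qed.

Lemma clearance_absurd : False.
Proof.
have [N1 _ N1P] := Dist_unif_cvg trial_cvg (divr_gt0 dl_gt0 (ltr0n _ 2)).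
have [l0 l0_gt0 l0P] := psi_small L1 L2_gt0 eta_gt0 (divr_gt0 dl_gt0 (ltr0n _ 3)).
have [m [N1m sm short]] := short_splits l0_gt0 N1.
have [p [q [l [chk_m ls _ slE]]]] := part_split sm.
have := run_check m; rewrite chk_m => -[_]; set J := nth (0, 0) _ l => unsafe.
have [J1_ge0 J12 J2T] := (part_in_horizon m).1 p q J (mem_nth _ ls).
have midT : 0 <= mid J <= T by rewrite /mid; apply/andP; split; lra.
have len_ge0 : 0 <= len J by rewrite /len; lra.
have len_le : len J <= l0 by rewrite -(ger0_norm len_ge0) -slE ltW.
have := l0P (len J); rewrite len_ge0 len_le => /(_ isT).
have := N1P m N1m p q (mid J) midT; rewrite ler_norml => /andP[close _].
have := clearance p q midT; have := dl_gt0; lra.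
Qed.

End Clearance.

End LineSearch.

Unset Implicit Arguments. Set Strict Implicit. Set Printing Implicit Defensive.

Theorem lemma7
  (R : realType) (n : nat) (Pc Ob : finType)
  (b : Pc -> R -> 'rV[R]_n -> set 'rV[R]_3) (o : Ob -> set 'rV[R]_3)
  (T d0 : R) (P : R -> R) (O : 'rV[R]_n -> R) (mu : R)
  (L1 L2 eta : R) (Dom : set 'rV[R]_n)
  (alpha0 gamma c : R) (newton : bool) (M : 'M[R]_n -> 'M[R]_n)
  (beta_lo beta_hi : R)
  (pi0 : ipartition R Pc Ob) (theta : 'rV[R]_n) (eps_in eps5 : R)
  (part : nat -> ipartition R Pc Ob) (eps alpha : nat -> R)
  (d : nat -> 'rV[R]_n) (chk : nat -> option (Pc * Ob * nat)) :
  (* setting *)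
  0 < T -> 0 <= d0 -> twice_diff O -> 0 < mu ->
  (* Assumption 1: (t, th) |-> dist(b_ij(t, th), o_k) sufficiently smooth *)
  (forall p q, twice_diff (fun z : R * 'rV[R]_n => Dist b o p q z.1 z.2)) ->
  (* Assumption 2: bounded feasible domain *)
  bounded_set Dom -> Dom theta ->
  (* Assumption 3 *)
  (forall x, 0 < x -> derivable P x 1 /\ derivable ('D_1 P) x 1) ->
  (forall x y, 0 < x -> x <= y -> P y <= P x) ->
  P x @[x --> 0^'+] --> +oo ->
  P x @[x --> +oo] --> 0 ->
  (x * P x) @[x --> 0^'+] --> +oo ->
  (* Lipschitz constant in time *)
  (forall p q t1 t2 th,
      `|Dist b o p q t1 th - Dist b o p q t2 th| <= L1 * `|t1 - t2|) ->
  (* safety check parameters *)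
  0 < L2 -> 0 < eta ->
  (* line-search parameters *)
  0 < alpha0 -> 0 < gamma < 1 -> 0 < c < 1 ->
  0 < beta_lo ->
  (forall H v, beta_lo * norm2 v ^+ 2 <= qform (M H) v <= beta_hi * norm2 v ^+ 2) ->
  (* initial partitions *)
  (forall p q, is_partition T (pi0 p q)) ->
  (* an execution of Line-Search at theta ... *)
  LS_run b o d0 P O mu L1 L2 eta c newton M alpha0 gamma eps_in pi0 theta
    part eps alpha d chk ->
  (* ... making infinitely many calls to subdivision *)
  (forall N, exists m, (N <= m)%N /\ subdivides_at eps alpha chk m) ->
  0 < eps5 ->
  (forall K : R, exists m, (K%:E < hatP b o d0 P eps5 (part m) theta)%E)
  \/ (exists m, ~ safe b o d0 L1 L2 eta (part m) theta).
Proof.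
move=> T_gt0 _ O_smooth _ Dist_smooth _ _ P_smooth _ _ _ _ Dist_lip L2_gt0 eta_gt0
  alpha0_gt0 gamma01 _ beta_gt0 M_bounds pi0_part run often _.
right.
have M_coercive H v : beta_lo * norm2 v ^+ 2 <= qform (M H) v by case/andP: (M_bounds H v).
have [[p [q [t [tT touch]]]]|untouched] :=
  pselect (exists p q t, 0 <= t <= T /\ Dist b o p q t theta <= d0).
  exists 0%N; case: run => -> _ _ _ _.
  exact: (touching_unsafe (eta := eta) pi0_part Dist_lip L2_gt0 tT touch).
exfalso; have [dl dl_gt0 clear] : exists2 dl, 0 < dl &
    forall p q t, 0 <= t <= T -> d0 + dl <= Dist b o p q t theta.
  apply: Dist_clearance T_gt0 Dist_smooth _ => p q t tT; rewrite ltNge.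
  by apply/negP => touch; apply: untouched; exists p, q, t.
exact: (clearance_absurd run alpha0_gt0 gamma01 often pi0_part T_gt0
  Dist_smooth Dist_lip P_smooth O_smooth beta_gt0 M_coercive L2_gt0 eta_gt0 dl_gt0 clear).
Qed.
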